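(* Let $H$ be a separable complex Hilbert space, $\{v_j\}_{j\in\mathbb N}$ an orthonormal basis of $H$, $\{w_j\}_{j\in\mathbb N}$ a set of unit vectors in $H$, and $N\ge1$. Let $p_N'$ be the orthogonal projection onto $H_N'=\operatorname{span}\{v_1,\dots,v_N\}$, let $\mathcal B_N=\{w_j\}_{1\le j\le N}\cup\{v_j\}_{j\ge N+1}$ and $\tilde{\mathcal B}_N=\{p_N'(w_1),\dots,p_N'(w_N)\}\cup\{v_j\}_{j\ge N+1}$. Then $\mathcal B_N$ is a Riesz basis of $H$ if and only if $\tilde{\mathcal B}_N$ is a Riesz basis of $H$.
   Context: A Riesz basis is a sequence $\{u_j\}$ such that there are $0<A\le B<\infty$ with $A\|f\|^2\le\sum_j|\langle f,u_j\rangle|^2\le B\|f\|^2$ for all $f\in H$ and $A\sum|a_j|^2\le\|\sum a_ju_j\|^2\le B\sum|a_j|^2$ for all finite coefficient sequences. *)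

From HB Require Import structures.
From mathcomp Require Import all_boot all_order all_algebra.
From mathcomp Require Import complex.
From mathcomp Require Import all_classical all_reals all_analysis.
Set Implicit Arguments. Unset Strict Implicit. Unset Printing Implicit Defensive.
Import Order.TTheory GRing.Theory Num.Theory.
Local Open Scope ring_scope.

Section Hilbert.
Variables (R : realType) (V : lmodType R[i]) (ip : V -> V -> R[i]).

Definition csq (z : R[i]) : R := complex.Re z ^+ 2 + complex.Im z ^+ 2.

Definition nsq (x : V) : R := complex.Re (ip x x).
Definition hnorm (x : V) : R := Num.sqrt (nsq x).

Definition is_inner_product : Prop :=
  [/\ (forall (a : R[i]) (x y z : V), ip (a *: x + y) z = a * ip x z + ip y z),
      (forall x y : V, ip y x = conjc (ip x y)),
      (forall x : V, complex.Im (ip x x) = 0 /\ 0 <= complex.Re (ip x x))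
    & (forall x : V, ip x x = 0 -> x = 0)].

Definition hcomplete : Prop :=
  forall u : nat -> V,
    (forall e : R, 0 < e -> exists M : nat, forall m n : nat,
        (M <= m)%N -> (M <= n)%N -> hnorm (u m - u n) < e) ->
    exists x : V, forall e : R, 0 < e -> exists M : nat, forall n : nat,
        (M <= n)%N -> hnorm (u n - x) < e.

Definition hilbert_space : Prop := is_inner_product /\ hcomplete.

Definition orthonormal_basis (v : nat -> V) : Prop :=
  (forall i j : nat, ip (v i) (v j) = (i == j)%:R) /\
  (forall f : V, (forall j, ip f (v j) = 0) -> f = 0).

Definition riesz_basis (u : nat -> V) : Prop :=
  exists A B : R, [/\ 0 < A, A <= B,
    (forall f : V,
        ((A * nsq f)%:E <= \sum_(0 <= j <oo) (csq (ip f (u j)))%:E)%E /\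
        (\sum_(0 <= j <oo) (csq (ip f (u j)))%:E <= (B * nsq f)%:E)%E)
  & (forall (n : nat) (a : nat -> R[i]),
        A * (\sum_(j < n) csq (a j)) <= nsq (\sum_(j < n) a j *: u j) /\
        nsq (\sum_(j < n) a j *: u j) <= B * (\sum_(j < n) csq (a j)))].

(* orthogonal projection onto span{v_0, ..., v_(N-1)} (v orthonormal) *)
Definition proj_span (v : nat -> V) (N : nat) (x : V) : V :=
  \sum_(i < N) ip x (v i) *: v i.

(* B_N  = {w_0..w_(N-1)} followed by {v_j}_(j >= N) *)
Definition BN (v w : nat -> V) (N : nat) (j : nat) : V :=
  if (j < N)%N then w j else v j.

(* B~_N = {p'_N(w_0)..p'_N(w_(N-1))} followed by {v_j}_(j >= N) *)
Definition BNt (v w : nat -> V) (N : nat) (j : nat) : V :=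
  if (j < N)%N then proj_span v N (w j) else v j.

End Hilbert.

(* The first N vectors enter only through their coordinates on v_1, ..., v_N:
   for any family x with ||x_j|| <= 1, the system {x_j}_{j<N} ∪ {v_j}_{j>=N} is
   a Riesz basis iff the N x N matrix G = (<x_j, v_i>) is invertible and
   {v_j}_{j>=N} satisfies a lower frame bound on span{v_1, ..., v_N}^⊥.
   Necessity: a nonzero vector of span{v_1, ..., v_N} orthogonal to every x_j
   would violate the lower frame bound, and G^-1 corrects any b ⊥ v_{<=N} by
   such a vector into one orthogonal to every x_j.  Sufficiency: split a vector
   (or a finite combination) into its parts along span{v_1, ..., v_N} and its
   complement; G^-1 controls the first, the tail bound the second, and Bessel's
   inequality absorbs the cross terms.  Since p'_N(w_j) has the same
   coordinates as w_j and norm <= 1, B_N and B~_N share the same G. *)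

From HB Require Import structures.
From mathcomp Require Import all_boot all_order all_algebra.
From mathcomp Require Import complex.
From mathcomp Require Import all_classical all_reals all_analysis.
From mathcomp Require Import ring lra.
Import Order.TTheory GRing.Theory Num.Theory.
Local Open Scope ring_scope.
Set Implicit Arguments. Unset Strict Implicit.

Section ComplexSquare.
Variable R : realType.
Implicit Types a b : R[i].

Lemma csq_ge0 a : 0 <= csq a.
Proof. by case: a => a1 a2; rewrite /csq addr_ge0 ?sqr_ge0. Qed.

Lemma csq0 : csq (0 : R[i]) = 0.
Proof. by rewrite /csq /= expr0n /= addr0. Qed.

Lemma csqN a : csq (- a) = csq a.
Proof. by case: a => a1 a2; rewrite /csq /= !sqrrN. Qed.

Lemma csqJ a : csq (conjc a) = csq a.
Proof. by case: a => a1 a2; rewrite /csq /= sqrrN. Qed.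

Lemma csqM a b : csq (a * b) = csq a * csq b.
Proof. by case: a => a1 a2; case: b => b1 b2; rewrite /csq /=; ring. Qed.

Lemma csqD_le a b : csq (a + b) <= 2 * csq a + 2 * csq b.
Proof.
case: a => a1 a2; case: b => b1 b2; rewrite /csq /=.
have := sqr_ge0 (a1 - b1); have := sqr_ge0 (a2 - b2); rewrite !expr2; nra.
Qed.

Lemma csq_sum_le n (F : 'I_n -> R[i]) :
  csq (\sum_(i < n) F i) <= 2 ^+ n * \sum_(i < n) csq (F i).
Proof.
elim: n F => [|n IH] F; first by rewrite !big_ord0 csq0 mulr0.
rewrite !big_ord_recr /= exprS; apply: le_trans (csqD_le _ _) _.
have := IH (fun i => F (widen_ord (leqnSn n) i)); have := csq_ge0 (F ord_max).
have : 1 <= 2 ^+ n :> R by rewrite exprn_ege1 // ler1n.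
nra.
Qed.

Lemma Re_conjcM a : complex.Re (conjc a * a) = csq a.
Proof. by case: a => a1 a2; rewrite /csq /=; ring. Qed.

Lemma ReM_real a b : complex.Im b = 0 -> complex.Re (a * b) = complex.Re a * complex.Re b.
Proof. by case: a => a1 a2; case: b => b1 b2 /= ->; ring. Qed.

Lemma Re_sum n (F : 'I_n -> R[i]) :
  complex.Re (\sum_(i < n) F i) = \sum_(i < n) complex.Re (F i).
Proof. exact: (raddf_sum (@complex.Re R : Rcomplex R -> R)). Qed.

End ComplexSquare.

Section InnerProduct.
Variables (R : realType) (V : lmodType R[i]) (ip : V -> V -> R[i]).
Hypothesis Hip : is_inner_product ip.
Local Notation nsq := (nsq ip).

Lemma ipDl x y z : ip (x + y) z = ip x z + ip y z.
Proof. by case: Hip => h _ _ _; rewrite -[x]scale1r h mul1r scale1r. Qed.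

Lemma ip0l z : ip 0 z = 0.
Proof. by apply: (addrI (ip 0 z)); rewrite -ipDl !addr0. Qed.

Lemma ipZl a x z : ip (a *: x) z = a * ip x z.
Proof. by case: Hip => h _ _ _; rewrite -[a *: x]addr0 h ip0l addr0. Qed.

Lemma ipC x y : ip y x = conjc (ip x y).
Proof. by case: Hip. Qed.

Lemma ipDr x y z : ip z (x + y) = ip z x + ip z y.
Proof. by rewrite !(ipC _ z) ipDl rmorphD. Qed.

Lemma ipZr a x z : ip z (a *: x) = conjc a * ip z x.
Proof. by rewrite !(ipC _ z) ipZl rmorphM. Qed.

Lemma ip0r z : ip z 0 = 0.
Proof. by rewrite ipC ip0l rmorph0. Qed.

Lemma ipNl x z : ip (- x) z = - ip x z.
Proof. by rewrite -scaleN1r ipZl mulN1r. Qed.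

Lemma ipNr x z : ip z (- x) = - ip z x.
Proof. by rewrite -scaleN1r ipZr rmorphN rmorph1 mulN1r. Qed.

Lemma ipBl x y z : ip (x - y) z = ip x z - ip y z.
Proof. by rewrite ipDl ipNl. Qed.

Lemma ipBr x y z : ip z (x - y) = ip z x - ip z y.
Proof. by rewrite ipDr ipNr. Qed.

Lemma ip_suml n (F : 'I_n -> V) z : ip (\sum_(i < n) F i) z = \sum_(i < n) ip (F i) z.
Proof. exact: (big_morph (ip^~ z) (fun x y => ipDl x y z) (ip0l z)). Qed.

Lemma ip_sumr n (F : 'I_n -> V) z : ip z (\sum_(i < n) F i) = \sum_(i < n) ip z (F i).
Proof. exact: (big_morph (ip z) (fun x y => ipDr x y z) (ip0r z)). Qed.

Lemma ip_orth x y : ip x y = 0 -> ip y x = 0.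
Proof. by move=> h; rewrite ipC h rmorph0. Qed.

Lemma ip_self x : ip x x = (nsq x)%:C%C.
Proof. by case: Hip => _ _ /(_ x) [+ _] _; rewrite /nsq; case: (ip x x) => a b /= ->. Qed.

Lemma nsq_ge0 x : 0 <= nsq x.
Proof. by case: Hip => _ _ /(_ x) []. Qed.

Lemma nsq_eq0 x : nsq x = 0 -> x = 0.
Proof. by case: Hip => _ _ _ h e; apply: h; rewrite ip_self e. Qed.

Lemma nsq0 : nsq 0 = 0.
Proof. by rewrite /nsq ip0l. Qed.

Lemma nsqZ a x : nsq (a *: x) = csq a * nsq x.
Proof. by rewrite /nsq ipZl ipZr mulrA [a * _]mulrC ReM_real ?Re_conjcM // ip_self. Qed.

Lemma nsq_pyth x y : ip x y = 0 -> nsq (x + y) = nsq x + nsq y.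
Proof.
move=> h; rewrite /nsq ipDl !ipDr h (ip_orth h) addr0 add0r.
exact: (raddfD (@complex.Re R : Rcomplex R -> R)).
Qed.

Lemma nsqD_le x y : nsq (x + y) <= 2 * nsq x + 2 * nsq y.
Proof.
have parallelogram : nsq (x + y) + nsq (x - y) = 2 * nsq x + 2 * nsq y.
  rewrite /nsq !ipDl !ipDr !ipNl !ipNr.
  by case: (ip x x) (ip x y) (ip y x) (ip y y) => [? ?] [? ?] [? ?] [? ?] /=; ring.
by have := nsq_ge0 (x - y); rewrite -parallelogram; lra.
Qed.

Lemma nsq_sum_le n (F : 'I_n -> V) :
  nsq (\sum_(i < n) F i) <= 2 ^+ n * \sum_(i < n) nsq (F i).
Proof.
elim: n F => [|n IH] F; first by rewrite !big_ord0 nsq0 mulr0.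
rewrite !big_ord_recr /= exprS; apply: le_trans (nsqD_le _ _) _.
have := IH (fun i => F (widen_ord (leqnSn n) i)); have := nsq_ge0 (F ord_max).
have : 1 <= 2 ^+ n :> R by rewrite exprn_ege1 // ler1n.
nra.
Qed.

Lemma cauchy_schwarz x y : csq (ip x y) <= nsq x * nsq y.
Proof.
have [/nsq_eq0 ->|y_neq0] := eqVneq (nsq y) 0; first by rewrite ip0r csq0 nsq0 mulr0.
have y_gt0 : 0 < nsq y by rewrite lt_def y_neq0 nsq_ge0.
set z := (nsq y)%:C%C *: x - ip x y *: y.
have ez : nsq z = nsq y * (nsq y * nsq x - csq (ip x y)).
  rewrite {1}/nsq /z !ipBl !ipBr !ipZl !ipZr (ipC x y) !ip_self.
  by case: (ip x y) => a b; rewrite /csq /=; ring.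
by have := nsq_ge0 z; rewrite ez pmulr_rge0 // subr_ge0 mulrC.
Qed.

End InnerProduct.

Section OrthonormalSequence.
Variables (R : realType) (V : lmodType R[i]) (ip : V -> V -> R[i]).
Hypothesis Hip : is_inner_product ip.
Variable v : nat -> V.
Hypothesis Hv : forall i j, ip (v i) (v j) = (i == j)%:R.
Local Notation nsq := (nsq ip).

Lemma ip_comb_v n (c : 'I_n -> R[i]) (k : 'I_n) :
  ip (\sum_(i < n) c i *: v i) (v k) = c k.
Proof.
rewrite (ip_suml Hip) (bigD1 k) //= (ipZl Hip) Hv eqxx mulr1 big1 ?addr0 // => i ik.
by rewrite (ipZl Hip) Hv (inj_eq val_inj) (negbTE ik) mulr0.
Qed.

Lemma ip_comb_v_out n (c : 'I_n -> R[i]) k :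
  (n <= k)%N -> ip (\sum_(i < n) c i *: v i) (v k) = 0.
Proof.
move=> nk; rewrite (ip_suml Hip) big1 // => i _.
by rewrite (ipZl Hip) Hv ltn_eqF ?mulr0 // (leq_trans (ltn_ord i) nk).
Qed.

Lemma nsq_comb_v n (c : 'I_n -> R[i]) :
  nsq (\sum_(i < n) c i *: v i) = \sum_(i < n) csq (c i).
Proof.
rewrite /nsq (ip_sumr Hip) Re_sum; apply: eq_bigr => i _.
by rewrite (ipZr Hip) ip_comb_v Re_conjcM.
Qed.

Lemma bessel n f : \sum_(k < n) csq (ip f (v k)) <= nsq f.
Proof.
set p := \sum_(k < n) ip f (v k) *: v k.
have fp_orth_v (k : 'I_n) : ip (f - p) (v k) = 0.
  by rewrite (ipBl Hip) (ip_comb_v (fun k : 'I_n => ip f (v k))) subrr.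
have fp_orth_p : ip (f - p) p = 0.
  by rewrite (ip_sumr Hip) big1 // => k _; rewrite (ipZr Hip) fp_orth_v mulr0.
have -> : nsq f = nsq (f - p) + nsq p by rewrite -(nsq_pyth Hip) // subrK.
by rewrite nsq_comb_v lerDr nsq_ge0.
Qed.

Definition tail_series (N : nat) (f : V) : \bar R :=
  (\sum_(N <= j <oo) (csq (ip f (v j)))%:E)%E.

Lemma tail_series_le N f : (tail_series N f <= (nsq f)%:E)%E.
Proof.
apply: lime_le; first by apply: is_cvg_nneseries => j _ _; rewrite lee_fin csq_ge0.
apply: nearW => n; rewrite sumEFin lee_fin.
have [Nn|nN] := leqP N n; last by rewrite big_geq ?nsq_ge0 // ltnW.
apply: le_trans (bessel n f); rewrite -(big_mkord xpredT (fun j => csq (ip f (v j)))).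
rewrite (big_cat_nat (leq0n N) Nn) /=.
by rewrite lerDr sumr_ge0 // => j _; rewrite csq_ge0.
Qed.

End OrthonormalSequence.

Lemma unitmx_of_inj (F : fieldType) n (M : 'M[F]_n) :
  (forall y : 'cV_n, M *m y = 0 -> y = 0) -> M \in unitmx.
Proof.
move=> injM; rewrite -unitmx_tr -row_free_unit -kermx_eq0.
apply/rowV0P => u /sub_kermxP uM0; apply: trmx_inj; rewrite trmx0; apply: injM.
by rewrite -[M]trmxK -trmx_mul uM0 trmx0.
Qed.

Lemma le_absorb (R : realFieldType) (u s Y Z a b c : R) :
  0 <= a -> 0 <= b -> 0 <= c -> 0 <= Y -> 0 <= Z ->
  u <= a * Y + b * s -> s <= c * Z -> u + s <= (a + (b + 1) * c) * (Y + Z).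
Proof.
move=> a0 b0 c0 Y0 Z0 hu hs.
have := ler_wpM2l (addr_ge0 b0 ler01) hs.
have := mulr_ge0 a0 Z0; have := mulr_ge0 (mulr_ge0 (addr_ge0 b0 ler01) c0) Y0.
lra.
Qed.

Section MatrixNorm.
Variable R : realType.

Definition mxnsq m n (A : 'M[R[i]]_(m, n)) : R := \sum_i \sum_j csq (A i j).

Lemma mxnsq_ge0 m n (A : 'M[R[i]]_(m, n)) : 0 <= mxnsq A.
Proof. by apply: sumr_ge0 => i _; apply: sumr_ge0 => j _; apply: csq_ge0. Qed.

Lemma mxnsq_mul_le m n p (A : 'M[R[i]]_(m, n)) (B : 'M[R[i]]_(n, p)) :
  mxnsq (A *m B) <= 2 ^+ n * (mxnsq A * mxnsq B).
Proof.
have entry (i : 'I_m) (k : 'I_p) : csq ((A *m B) i k) <=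
    2 ^+ n * ((\sum_j csq (A i j)) * \sum_j csq (B j k)).
  rewrite mxE; apply: le_trans (csq_sum_le _) _; rewrite ler_wpM2l ?exprn_ge0 //.
  rewrite mulr_suml; apply: ler_sum => j _; rewrite csqM ler_wpM2l ?csq_ge0 //.
  by rewrite (bigD1 j) //= lerDl sumr_ge0 // => l _; rewrite csq_ge0.
apply: le_trans (ler_sum _ (fun i _ => ler_sum _ (fun k _ => entry i k))) _.
have -> : mxnsq B = \sum_k \sum_j csq (B j k) by exact: exchange_big.
by rewrite mulr_suml !mulr_sumr; apply: ler_sum => i _; rewrite !mulr_sumr.
Qed.

Variables (n : nat) (M : 'M[R[i]]_n).
Hypothesis uM : M \in unitmx.

Lemma mxnsq_le_unit_mulmx m (A : 'M[R[i]]_(n, m)) :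
  mxnsq A <= 2 ^+ n * mxnsq (invmx M) * mxnsq (M *m A).
Proof. by rewrite -mulrA -{1}(mulKmx uM A) mxnsq_mul_le. Qed.

Lemma mxnsq_le_mulmx_unit m (A : 'M[R[i]]_(m, n)) :
  mxnsq A <= 2 ^+ n * mxnsq (invmx M) * mxnsq (A *m M).
Proof. by rewrite -mulrA [_ * mxnsq (A *m M)]mulrC -{1}(mulmxK uM A) mxnsq_mul_le. Qed.

End MatrixNorm.

Lemma big_ord_split_head (M : nmodType) n N (F : nat -> M) : (N <= n)%N ->
  \sum_(j < n) F j = \sum_(j < N) F j + \sum_(j < n) (if (j < N)%N then 0 else F j).
Proof.
move=> Nn; rewrite (bigID (fun j : 'I_n => (j < N)%N)) /= (big_ord_widen n F Nn).
by congr (_ + _); rewrite big_mkcond; apply: eq_bigr => j _; case: (j < N)%N.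
Qed.

Section RieszBounds.
Variables (R : realType) (V : lmodType R[i]) (ip : V -> V -> R[i]).
Hypothesis Hip : is_inner_product ip.
Local Notation nsq := (nsq ip).
Implicit Types (u : nat -> V) (A B : R).

Definition frame_bounds u A B := forall f : V,
  ((A * nsq f)%:E <= \sum_(0 <= j <oo) (csq (ip f (u j)))%:E)%E /\
  (\sum_(0 <= j <oo) (csq (ip f (u j)))%:E <= (B * nsq f)%:E)%E.

Definition seq_bounds u A B (n : nat) := forall a : nat -> R[i],
  A * (\sum_(j < n) csq (a j)) <= nsq (\sum_(j < n) a j *: u j) /\
  nsq (\sum_(j < n) a j *: u j) <= B * (\sum_(j < n) csq (a j)).

Lemma frame_bounds_le u A B A' B' :
  A <= A' -> B' <= B -> frame_bounds u A' B' -> frame_bounds u A B.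
Proof.
move=> AA' B'B hF f; have [lo hi] := hF f; split.
  by apply: le_trans lo; rewrite lee_fin ler_wpM2r ?nsq_ge0.
by apply: le_trans hi _; rewrite lee_fin ler_wpM2r ?nsq_ge0.
Qed.

Lemma seq_bounds_le u A B A' B' n :
  A <= A' -> B' <= B -> seq_bounds u A' B' n -> seq_bounds u A B n.
Proof.
move=> AA' B'B hS a; have [lo hi] := hS a.
have sum_ge0 : 0 <= \sum_(j < n) csq (a j) by apply: sumr_ge0 => j _; apply: csq_ge0.
by split; [apply: le_trans lo | apply: le_trans hi _]; rewrite ler_wpM2r.
Qed.

Lemma seq_bounds_widen u A B n N :
  (n <= N)%N -> seq_bounds u A B N -> seq_bounds u A B n.
Proof.
move=> nN hS a; pose a' j := if (j < n)%N then a j else 0.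
have -> : \sum_(j < n) a j *: u j = \sum_(j < N) a' j *: u j.
  rewrite (big_ord_widen N (fun j => a j *: u j) nN) big_mkcond.
  by apply: eq_bigr => j _; rewrite /a'; case: ifP; rewrite ?scale0r.
have -> : \sum_(j < n) csq (a j) = \sum_(j < N) csq (a' j).
  rewrite (big_ord_widen N (fun j => csq (a j)) nN) big_mkcond.
  by apply: eq_bigr => j _; rewrite /a'; case: ifP; rewrite ?csq0.
exact: hS.
Qed.

Lemma riesz_basis_intro u N A1 B1 A2 B2 : 0 < A1 -> 0 < A2 ->
  frame_bounds u A1 B1 -> (forall n, (N <= n)%N -> seq_bounds u A2 B2 n) ->
  riesz_basis ip u.
Proof.
move=> A1_gt0 A2_gt0 hF hS.
exists (Num.min A1 A2), (Num.max (Num.min A1 A2) (Num.max B1 B2)); split.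
- by rewrite lt_min A1_gt0.
- by rewrite le_max lexx.
- by apply: frame_bounds_le hF; rewrite ?ge_min ?lexx // !le_max lexx !orbT.
move=> n; apply: (seq_bounds_widen (leq_maxl n N)).
by apply: seq_bounds_le (hS _ (leq_maxr n N)); rewrite ?ge_min ?lexx ?orbT // !le_max lexx !orbT.
Qed.

End RieszBounds.

Section BasisFromGram.
Variables (R : realType) (V : lmodType R[i]) (ip : V -> V -> R[i]).
Hypothesis Hip : is_inner_product ip.
Variable v : nat -> V.
Hypothesis Hv : forall i j, ip (v i) (v j) = (i == j)%:R.
Variable N : nat.
Local Notation nsq := (nsq ip).
Local Notation tail := (tail_series ip v N).

Definition gram (x : nat -> V) : 'M[R[i]]_N := \matrix_(j, i) ip (x j) (v i).

(* Holds by Parseval when [v] is total; the characterization does not need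
   totality. *)
Definition tail_frame := exists2 A : R, 0 < A &
  forall b, (forall k : 'I_N, ip b (v k) = 0) -> ((A * nsq b)%:E <= tail b)%E.

Definition vec_of_col (y : 'cV[R[i]]_N) : V := \sum_(i < N) conjc (y i 0) *: v i.

Lemma ip_vec_of_col_v y (k : 'I_N) : ip (vec_of_col y) (v k) = conjc (y k 0).
Proof. exact: (ip_comb_v Hip Hv (fun i => conjc (y i 0))). Qed.

Lemma ip_vec_of_col_v_out y k : (N <= k)%N -> ip (vec_of_col y) (v k) = 0.
Proof. exact: (ip_comb_v_out Hip Hv (fun i => conjc (y i 0))). Qed.

Lemma ip_vec_of_col (x : nat -> V) y (j : 'I_N) : ip (x j) (vec_of_col y) = (gram x *m y) j 0.
Proof.
rewrite (ip_sumr Hip) mxE; apply: eq_bigr => i _.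
by rewrite (ipZr Hip) conjcK mxE mulrC.
Qed.

Lemma nsq_vec_of_col y : nsq (vec_of_col y) = mxnsq y.
Proof. by rewrite (nsq_comb_v Hip Hv); apply: eq_bigr => i _; rewrite big_ord1 csqJ. Qed.

Lemma ip_orth_vec_of_col b y :
  (forall k : 'I_N, ip b (v k) = 0) -> ip b (vec_of_col y) = 0.
Proof. by move=> hb; rewrite (ip_sumr Hip) big1 // => i _; rewrite (ipZr Hip) hb mulr0. Qed.

Lemma tail_series_eq f g :
  (forall j, (N <= j)%N -> ip f (v j) = ip g (v j)) -> tail f = tail g.
Proof.
by move=> h; apply: congr_lim; apply/funext => n; apply: eq_big_nat => j /andP[/h ->].
Qed.

Lemma tail_vec_of_col y : tail (vec_of_col y) = 0%E.
Proof. by apply: eseries0 => j Nj _; rewrite ip_vec_of_col_v_out // csq0. Qed.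

Lemma series_BN x f :
  (\sum_(0 <= j <oo) (csq (ip f (BN v x N j)))%:E)%E =
  ((\sum_(j < N) csq (ip f (x j)))%:E + tail f)%E.
Proof.
rewrite (@nneseries_split _ _ 0 N); last by move=> k _; rewrite lee_fin csq_ge0.
rewrite add0n big_mkord sumEFin; congr (_%:E + _)%E.
  by apply: eq_bigr => j _; rewrite /BN ltn_ord.
apply: congr_lim; apply/funext => n; apply: eq_big_nat => j /andP[Nj _].
by rewrite /BN ltnNge Nj.
Qed.

Lemma tail_ge_of_frame x A B : frame_bounds ip (BN v x N) A B ->
  forall g, (forall j : 'I_N, ip g (x j) = 0) -> ((A * nsq g)%:E <= tail g)%E.
Proof.
by move=> hF g hg; have := (hF g).1; rewrite series_BN big1 ?add0e // => j _; rewrite hg csq0.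
Qed.

Lemma gram_unit_of_riesz x : riesz_basis ip (BN v x N) -> gram x \in unitmx.
Proof.
move=> [A [B [A_gt0 _ hF _]]]; apply: unitmx_of_inj => y Gy0.
set h := vec_of_col y.
have h_orth_x (j : 'I_N) : ip h (x j) = 0.
  by apply: (ip_orth Hip); rewrite ip_vec_of_col Gy0 mxE.
have := tail_ge_of_frame hF h_orth_x; rewrite tail_vec_of_col lee_fin pmulr_rle0 // => h_le0.
have h0 : h = 0 by apply: (nsq_eq0 Hip); apply/eqP; rewrite eq_le h_le0 nsq_ge0.
apply/matrixP => i j; rewrite (ord1 j) mxE; apply/eqP.
by rewrite -conjc_eq0 -ip_vec_of_col_v -/h h0 (ip0l Hip).
Qed.

Lemma tail_frame_of_riesz x : riesz_basis ip (BN v x N) -> tail_frame.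
Proof.
move=> rB; have uG := gram_unit_of_riesz rB; case: rB => [A [B [A_gt0 _ hF _]]].
exists A => // b hb.
set y := invmx (gram x) *m \col_j (- ip (x j) b).
set g := b + vec_of_col y.
have g_orth_x (j : 'I_N) : ip g (x j) = 0.
  by apply: (ip_orth Hip); rewrite (ipDr Hip) ip_vec_of_col mulKVmx // mxE subrr.
have -> : tail b = tail g.
  by apply: tail_series_eq => k Nk; rewrite (ipDl Hip) ip_vec_of_col_v_out // addr0.
apply: le_trans (tail_ge_of_frame hF g_orth_x); rewrite lee_fin ler_wpM2l ?(ltW A_gt0) //.
by rewrite /g (nsq_pyth Hip (ip_orth_vec_of_col y hb)) lerDl nsq_ge0.
Qed.

Local Notation proj := (proj_span ip v N).

Lemma proj_span_vec_of_col f : proj f = vec_of_col (\col_i conjc (ip f (v i))).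
Proof. by apply: eq_bigr => i _; rewrite mxE conjcK. Qed.

Lemma ip_proj_span_v f (k : 'I_N) : ip (proj f) (v k) = ip f (v k).
Proof. exact: (ip_comb_v Hip Hv (fun i => ip f (v i))). Qed.

Lemma gram_proj_span w : gram (fun j => proj (w j)) = gram w.
Proof. by apply/matrixP => j i; rewrite !mxE ip_proj_span_v. Qed.

Lemma nsq_proj_span_le f : nsq (proj f) <= nsq f.
Proof. by rewrite /proj_span (nsq_comb_v Hip Hv (fun i => ip f (v i))) bessel. Qed.

Definition tail_coef (a : nat -> R[i]) j := if (j < N)%N then 0 else a j.

Section Sufficiency.
Variable x : nat -> V.
Hypothesis x_le1 : forall j : 'I_N, nsq (x j) <= 1.
Hypothesis uG : gram x \in unitmx.
Let K := 2 ^+ N * mxnsq (invmx (gram x)).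
Let K_ge0 : 0 <= K. Proof. by rewrite mulr_ge0 ?exprn_ge0 ?mxnsq_ge0. Qed.

Lemma head_series_le f : \sum_(j < N) csq (ip f (x j)) <= N%:R * nsq f.
Proof.
have cs (j : 'I_N) : csq (ip f (x j)) <= nsq f.
  by apply: le_trans (cauchy_schwarz Hip _ _) _; rewrite ler_piMr ?nsq_ge0.
by apply: le_trans (ler_sum _ (fun j _ => cs j)) _; rewrite sumr_const card_ord mulr_natl.
Qed.

Lemma nsq_proj_span_le_head f : nsq (proj f) <=
  2 * K * (\sum_(j < N) csq (ip f (x j))) + 2 * K * N%:R * nsq (f - proj f).
Proof.
pose dv : 'cV[R[i]]_N := \col_i conjc (ip f (v i)).
have head : nsq (proj f) <= K * \sum_(j < N) csq (ip (proj f) (x j)).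
  have -> : \sum_(j < N) csq (ip (proj f) (x j)) = mxnsq (gram x *m dv).
    apply: eq_bigr => j _.
    by rewrite big_ord1 proj_span_vec_of_col -ip_vec_of_col (ipC Hip) csqJ.
  by rewrite proj_span_vec_of_col nsq_vec_of_col; apply: mxnsq_le_unit_mulmx.
have cross (j : 'I_N) :
    csq (ip (proj f) (x j)) <= 2 * csq (ip f (x j)) + 2 * csq (ip (f - proj f) (x j)).
  have -> : ip (proj f) (x j) = ip f (x j) + - ip (f - proj f) (x j).
    by rewrite (ipBl Hip) opprB addrC subrK.
  by rewrite -(csqN (ip (f - _) _)) csqD_le.
have cross_sum : \sum_(j < N) csq (ip (proj f) (x j)) <=
    2 * \sum_(j < N) csq (ip f (x j)) + 2 * \sum_(j < N) csq (ip (f - proj f) (x j)).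
  by apply: le_trans (ler_sum _ (fun j _ => cross j)) _; rewrite big_split /= -!mulr_sumr.
apply: le_trans head _; apply: le_trans (ler_wpM2l K_ge0 cross_sum) _.
have := ler_wpM2l K_ge0 (head_series_le (f - proj f)); lra.
Qed.

Lemma BN_frame_upper f :
  (\sum_(0 <= j <oo) (csq (ip f (BN v x N j)))%:E <= ((N%:R + 1) * nsq f)%:E)%E.
Proof.
rewrite series_BN mulrDl mul1r EFinD.
by apply: leeD; [rewrite lee_fin head_series_le | exact: tail_series_le].
Qed.

Lemma BN_frame_lower : tail_frame -> exists2 A : R, 0 < A & forall f,
  ((A * nsq f)%:E <= \sum_(0 <= j <oo) (csq (ip f (BN v x N j)))%:E)%E.
Proof.
move=> [A0 A0_gt0 hA0].
have twoK_ge0 := mulr_ge0 (ler0n R 2) K_ge0.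
have twoKN_ge0 := mulr_ge0 twoK_ge0 (ler0n R N).
have A0V_ge0 : 0 <= A0^-1 by rewrite invr_ge0 ltW.
set C := 2 * K + (2 * K * N%:R + 1) * A0^-1.
have C_gt0 : 0 < C.
  have : 0 < (2 * K * N%:R + 1) * A0^-1 by rewrite pmulr_lgt0 ?invr_gt0 //; lra.
  by rewrite /C; lra.
exists C^-1 => [|f]; first by rewrite invr_gt0.
rewrite series_BN; set b := f - proj f.
have b_orth (k : 'I_N) : ip b (v k) = 0 by rewrite (ipBl Hip) ip_proj_span_v subrr.
have -> : tail f = tail b.
  apply: tail_series_eq => k Nk.
  by rewrite (ipBl Hip) proj_span_vec_of_col ip_vec_of_col_v_out // subr0.
have nsq_f : nsq f = nsq (proj f) + nsq b.
  have pb : ip (proj f) b = 0.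
    by apply: (ip_orth Hip); rewrite proj_span_vec_of_col ip_orth_vec_of_col.
  by rewrite -(nsq_pyth Hip pb) addrC subrK.
have X_ge0 : 0 <= \sum_(j < N) csq (ip f (x j)) by apply: sumr_ge0 => j _; apply: csq_ge0.
have Z_ge0 := mulr_ge0 (ltW A0_gt0) (nsq_ge0 Hip b).
have hs : nsq b <= A0^-1 * (A0 * nsq b) by rewrite mulKf ?gt_eqF.
apply: le_trans (leeD2l _ (hA0 b b_orth)); rewrite -EFinD lee_fin nsq_f ler_pdivrMl //.
exact: le_absorb twoK_ge0 twoKN_ge0 A0V_ge0 X_ge0 Z_ge0 (nsq_proj_span_le_head f) hs.
Qed.

Lemma comb_BN_split n (a : nat -> R[i]) : (N <= n)%N ->
  \sum_(j < n) a j *: BN v x N j =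
  \sum_(j < N) a j *: x j + \sum_(j < n) tail_coef a j *: v j.
Proof.
move=> Nn; rewrite (big_ord_split_head (fun j => a j *: BN v x N j) Nn); congr (_ + _).
  by apply: eq_bigr => j _; rewrite /BN ltn_ord.
by apply: eq_bigr => j _; rewrite /tail_coef /BN; case: (j < N)%N; rewrite ?scale0r.
Qed.

Lemma sum_csq_split n (a : nat -> R[i]) : (N <= n)%N ->
  \sum_(j < n) csq (a j) = \sum_(j < N) csq (a j) + \sum_(j < n) csq (tail_coef a j).
Proof.
move=> Nn; rewrite (big_ord_split_head (fun j => csq (a j)) Nn); congr (_ + _).
by apply: eq_bigr => j _; rewrite /tail_coef; case: (j < N)%N; rewrite ?csq0.
Qed.

Lemma nsq_head_comb_le (a : nat -> R[i]) :
  nsq (\sum_(j < N) a j *: x j) <= 2 ^+ N * \sum_(j < N) csq (a j).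
Proof.
apply: le_trans (nsq_sum_le Hip _) _; rewrite ler_wpM2l ?exprn_ge0 // ler_sum // => j _.
by rewrite (nsqZ Hip) ler_piMr ?csq_ge0.
Qed.

Lemma sum_csq_le_head_coords (a : nat -> R[i]) : \sum_(j < N) csq (a j) <=
  K * \sum_(k < N) csq (ip (\sum_(j < N) a j *: x j) (v k)).
Proof.
pose arow : 'rV[R[i]]_N := \row_j a j.
have -> : \sum_(j < N) csq (a j) = mxnsq arow.
  by rewrite /mxnsq big_ord1; apply: eq_bigr => j _; rewrite mxE.
suff -> : \sum_(k < N) csq (ip (\sum_(j < N) a j *: x j) (v k)) = mxnsq (arow *m gram x).
  exact: mxnsq_le_mulmx_unit.
rewrite /mxnsq big_ord1; apply: eq_bigr => k _; rewrite mxE (ip_suml Hip).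
by congr csq; apply: eq_bigr => j _; rewrite (ipZl Hip) !mxE.
Qed.

Lemma BN_seq_upper n (a : nat -> R[i]) : (N <= n)%N ->
  nsq (\sum_(j < n) a j *: BN v x N j) <= (2 ^+ N.+1 + 2) * \sum_(j < n) csq (a j).
Proof.
move=> Nn; rewrite comb_BN_split // sum_csq_split //.
apply: le_trans (nsqD_le Hip _ _) _; rewrite (nsq_comb_v Hip Hv) exprS.
have be_ge0 : 0 <= \sum_(j < n) csq (tail_coef a j).
  by apply: sumr_ge0 => j _; apply: csq_ge0.
have al_ge0 : 0 <= \sum_(j < N) csq (a j) by apply: sumr_ge0 => j _; apply: csq_ge0.
have := nsq_head_comb_le a; have := mulr_ge0 (exprn_ge0 N (ler0n R 2)) be_ge0.
lra.
Qed.

Lemma BN_seq_lower : exists2 A : R, 0 < A & forall n (a : nat -> R[i]), (N <= n)%N ->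
  A * (\sum_(j < n) csq (a j)) <= nsq (\sum_(j < n) a j *: BN v x N j).
Proof.
have two_pow_ge0 := mulr_ge0 (ler0n R 2) (exprn_ge0 N (ler0n R 2)).
set C := 2 + (2 * 2 ^+ N + 1) * K.
have C_gt0 : 0 < C.
  by rewrite /C; have := mulr_ge0 (addr_ge0 two_pow_ge0 ler01) K_ge0; lra.
exists C^-1 => [|n a Nn]; first by rewrite invr_gt0.
rewrite comb_BN_split // sum_csq_split //.
set y := \sum_(j < N) a j *: x j; set g := y + _.
have g_v (k : 'I_n) : ip g (v k) = ip y (v k) + tail_coef a k.
  by rewrite (ipDl Hip) (ip_comb_v Hip Hv (fun j : 'I_n => tail_coef a j)).
set Z := \sum_(k < N) csq (ip g (v k)).
set Y := \sum_(k < n) (if (k < N)%N then 0 else csq (ip g (v k))).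
have Z_ge0 : 0 <= Z by apply: sumr_ge0 => k _; apply: csq_ge0.
have Y_ge0 : 0 <= Y by apply: sumr_ge0 => k _; case: ifP => _; rewrite ?csq_ge0.
have head : \sum_(j < N) csq (a j) <= K * Z.
  suff -> : Z = \sum_(k < N) csq (ip y (v k)) by apply: sum_csq_le_head_coords.
  apply: eq_bigr => k _.
  by rewrite (g_v (widen_ord Nn k)) /tail_coef /= ltn_ord addr0.
have tail : \sum_(j < n) csq (tail_coef a j) <= 2 * Y + 2 * 2 ^+ N * \sum_(j < N) csq (a j).
  have term (k : 'I_n) : csq (tail_coef a k) <=
      2 * (if (k < N)%N then 0 else csq (ip g (v k))) + 2 * csq (ip y (v k)).
    have := g_v k; rewrite /tail_coef; case: ifP => _ gk.
      by rewrite csq0 mulr0 add0r mulr_ge0 ?csq_ge0.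
    have -> : a k = ip g (v k) + - ip y (v k) by rewrite gk addrAC subrr add0r.
    by rewrite -(csqN (ip y _)); apply: csqD_le.
  apply: le_trans (ler_sum _ (fun k _ => term k)) _.
  rewrite big_split /= -!mulr_sumr -mulrA lerD2l ler_wpM2l //.
  exact: le_trans (bessel Hip Hv n y) (nsq_head_comb_le a).
have bessel_g : Y + Z <= nsq g.
  by rewrite addrC -(big_ord_split_head (fun k => csq (ip g (v k))) Nn) bessel.
have := le_absorb (ler0n R 2) two_pow_ge0 K_ge0 Y_ge0 Z_ge0 tail head.
by rewrite ler_pdivrMl // addrC => /le_trans; apply; rewrite ler_wpM2l // ltW.
Qed.

End Sufficiency.

Theorem riesz_BN_iff (x : nat -> V) : (forall j : 'I_N, nsq (x j) <= 1) ->
  riesz_basis ip (BN v x N) <-> gram x \in unitmx /\ tail_frame.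
Proof.
move=> x_le1; split=> [rB | [uG tF]].
  by split; [apply: gram_unit_of_riesz rB | apply: tail_frame_of_riesz rB].
have [A1 A1_gt0 lo] := BN_frame_lower x_le1 uG tF.
have [A2 A2_gt0 hS] := BN_seq_lower x_le1 uG.
have hF : frame_bounds ip (BN v x N) A1 (N%:R + 1).
  by move=> f; split; [apply: lo | apply: BN_frame_upper].
have hS' n : (N <= n)%N -> seq_bounds ip (BN v x N) A2 (2 ^+ N.+1 + 2) n.
  by move=> Nn a; split; [apply: hS | apply: BN_seq_upper].
exact (riesz_basis_intro Hip A1_gt0 A2_gt0 hF hS').
Qed.

End BasisFromGram.

Unset Implicit Arguments.
Theorem mainTheorem4 (R : realType) (V : lmodType R[i]) (ip : V -> V -> R[i])
    (HH : hilbert_space ip) (v w : nat -> V)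
    (Hv : orthonormal_basis ip v) (Hw : forall j : nat, hnorm ip (w j) = 1)
    (N : nat) (HN : (1 <= N)%N) :
  riesz_basis ip (BN v w N) <-> riesz_basis ip (BNt ip v w N).
Proof.
have [Hip _] := HH; have [Hv_on _] := Hv.
have w_le1 (j : 'I_N) : nsq ip (w j) <= 1.
  by rewrite -(sqr_sqrtr (nsq_ge0 Hip (w j))) [Num.sqrt _]Hw expr1n.
have pw_le1 (j : 'I_N) : nsq ip (proj_span ip v N (w j)) <= 1.
  exact: le_trans (nsq_proj_span_le Hip Hv_on N (w j)) (w_le1 j).
rewrite (riesz_BN_iff Hip Hv_on w_le1) -[BNt ip v w N]/(BN v (fun j => proj_span ip v N (w j)) N).
by rewrite (riesz_BN_iff Hip Hv_on pw_le1) gram_proj_span.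
Qed.
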